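(* Let $K$ be uniformly distributed on $\{0,1\}^N$, let $\mathcal L$ be a finite set and $\Psi:\{0,1\}^N\to\mathcal L$. For $\lambda\in\mathcal L$ put $S_\lambda := \Psi^{-1}(\lambda)$, let $\mathbb P_\lambda(\cdot) := \mathbb P(\cdot\mid \Psi(K)=\lambda)$ (so $K$ is uniform on $S_\lambda$ under $\mathbb P_\lambda$), and write $\mathbb E_\lambda$ for expectation under $\mathbb P_\lambda$. For $1\le r\le d$ and probes $p_1,\dots,p_r\in\{1,\dots,N\}$ define \[ g_\lambda(p_1,\dots,p_r) := \sum_{x\in\{0,1\}^r}\mathbb P_\lambda\big((K[p_1],\dots,K[p_r]) = x\big)^2. \] Let $P_1,\dots,P_d$ be independent uniform elements of $\{1,\dots,N\}$, independent of $K$. Let $\alpha\ge 0$ with $\alpha+d\le N$. If $\log_2|S_\lambda| \ge N-\alpha$, then \[ \mathbb E_\lambda\big[g_\lambda(P_1,\dots,P_d)\big] \le \Big[h^{-1}\Big(1-\frac{\alpha+d}{N}\Big)\Big]^d. \]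
   Context: $K[i]$ is the $i$-th bit of $K$. $h(p)=p\log_2\frac1p+(1-p)\log_2\frac1{1-p}$ is the binary entropy function on $[0,1]$; $h^{-1}:[0,1]\to[1/2,1]$ is the inverse of the restriction of $h$ to $[1/2,1]$ (a strictly decreasing bijection onto $[0,1]$). *)

From HB Require Import structures.
From mathcomp Require Import all_boot all_order all_algebra.
From mathcomp Require Import all_classical all_reals all_analysis.
Set Implicit Arguments. Unset Strict Implicit. Unset Printing Implicit Defensive.
Import Order.TTheory GRing.Theory Num.Theory.
Local Open Scope ring_scope.
Local Open Scope classical_set_scope.

Section Defs.
Variable R : realType.

(* base-2 logarithm (ln 0 = 0 in MathComp-Analysis) *)
Definition log2 (x : R) : R := ln x / ln 2.

(* binary entropy h(p) = p log2 (1/p) + (1-p) log2 (1/(1-p));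
   at p = 0 or 1 the corresponding term is 0 since 0^-1 = 0 and ln 0 = 0. *)
Definition binent (p : R) : R := p * log2 p^-1 + (1 - p) * log2 (1 - p)^-1.

(* h^{-1} : inverse of the restriction of h to [1/2, 1]
   (a value p in [1/2,1] with h p = y; unique for y in [0,1]). *)
Definition binent_inv (y : R) : R :=
  xget 1 [set p : R | (2^-1 <= p <= 1) /\ binent p = y].

Variables (N : nat) (L : finType) (Psi : {ffun 'I_N -> bool} -> L) (lam : L).

Definition S_lam : {set {ffun 'I_N -> bool}} := [set k | Psi k == lam].

Definition P_lam (E : pred {ffun 'I_N -> bool}) : R :=
  #|[set k | (Psi k == lam) && E k]|%:R / #|S_lam|%:R.

Definition g_lam (r : nat) (p : 'I_r -> 'I_N) : R :=
  \sum_(x : {ffun 'I_r -> bool})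
     (P_lam (fun k => [forall i : 'I_r, k (p i) == x i])) ^+ 2.

(* E_lambda[g_lambda(P_1,...,P_d)], P_1..P_d iid uniform on {1..N},
   independent of K (g_lambda does not depend on K). *)
Definition Eg_lam (d : nat) : R :=
  (N%:R ^+ d)^-1 * \sum_(p : {ffun 'I_d -> 'I_N}) g_lam p.

End Defs.

(* Expanding the squares, E_lambda[g_lambda(P_1..P_d)] is the average over pairs (k, k') of S_lambda
   of (a(k,k')/N)^d, where a(k,k') is the number of coordinates on which k and k' agree.  Fix k and
   t = h^{-1}(1 - (alpha+d)/N).  With b = N ln(t/(1-t)) and r = d/(b t) <= 1, convexity of exp and
   y <= e^(y-1) give x^d <= t^d (r e^(b(x-t)) + 1 - r).  Summing e^(b(a(k,k')/N - t)) over ALL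
   k' in {0,1}^N gives exactly 2^(N h(t)) <= |S_lambda|, so the row sums of (a/N)^d are at most
   |S_lambda| t^d.  The condition d <= b t is where 1 - h(t) <= t ln(t/(1-t)) on [1/2, 1) enters. *)
From HB Require Import structures.
From mathcomp Require Import all_boot all_order all_algebra.
From mathcomp Require Import all_classical all_reals all_analysis.
From mathcomp Require Import ring lra.
Set Implicit Arguments. Unset Strict Implicit. Unset Printing Implicit Defensive.
Import Order.TTheory GRing.Theory Num.Theory.
Local Open Scope ring_scope.

Section RealInequalities.
Variable R : realType.
Implicit Types x y t u r b : R.

Lemma ln_le_subr1 x : 0 < x -> ln x <= x - 1.
Proof. by move=> x0; have := expR_ge1Dx (ln x); rewrite lnK ?posrE //; lra. Qed.

Lemma expR_mulr_le r u : 0 <= r -> r <= 1 -> expR (r * u) <= r * expR u + (1 - r).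
Proof.
move=> r0 r1; have := convex_expR (Itv01 r0 r1) u 0.
by rewrite !convRE /= mulr0 addr0 expR0 mulr1.
Qed.

Lemma exprn_le_expR y n : 0 <= y -> y ^+ n <= expR (n%:R * (y - 1)).
Proof.
move=> y0; rewrite expRM_natl; apply: lerXn2r; rewrite ?nnegrE ?expR_ge0 //.
by have := expR_ge1Dx (y - 1); lra.
Qed.

Lemma exprn_le_expR_mix x t b r n : 0 <= x -> 0 < t -> 0 <= r -> r <= 1 ->
  r * b * t = n%:R ->
  x ^+ n <= t ^+ n * (r * expR (b * (x - t)) + (1 - r)).
Proof.
move=> x0 t0 r0 r1 rbt.
have xE : x = t * (x / t) by rewrite mulrC divfK ?gt_eqF.
have expE : r * (b * (x - t)) = n%:R * (x / t - 1) by rewrite -rbt {1}xE; ring.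
rewrite {1}xE exprMn; apply: ler_wpM2l; first by rewrite exprn_ge0 ?ltW.
have := expR_mulr_le (b * (x - t)) r0 r1; rewrite expE; apply: le_trans.
exact/exprn_le_expR/divr_ge0/ltW.
Qed.

Lemma sum_exprn_le_of_sum_expR (T : finType) (A : {pred T}) (x : T -> R) b t n :
  (forall i, 0 <= x i) -> 0 < t -> n%:R <= b * t ->
  \sum_(i in A) expR (b * (x i - t)) <= #|A|%:R ->
  \sum_(i in A) x i ^+ n <= #|A|%:R * t ^+ n.
Proof.
move=> x0 t0 n_le sum_exp_le.
have [bt_le0|bt_gt0] := lerP (b * t) 0.
  have /eqP-> : n == 0%N by rewrite -(lern0 R); lra.
  by under eq_bigr do rewrite expr0; rewrite sumr_const expr0 mulr1.
set r := n%:R / (b * t).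
have r0 : 0 <= r by rewrite divr_ge0 ?ler0n ?ltW.
have r1 : r <= 1 by rewrite ler_pdivrMr ?mul1r.
have rbt : r * b * t = n%:R by rewrite -mulrA divfK ?gt_eqF.
apply: (@le_trans _ _ (\sum_(i in A) t ^+ n * (r * expR (b * (x i - t)) + (1 - r)))).
  by apply: ler_sum => i _; exact: exprn_le_expR_mix.
rewrite -mulr_sumr big_split /= -mulr_sumr sumr_const [X in _ <= X]mulrC.
apply: ler_wpM2l; first by rewrite exprn_ge0 ?ltW.
have := ler_wpM2l r0 sum_exp_le; rewrite -mulr_natr; lra.
Qed.

End RealInequalities.

Section FiniteSums.
Variable R : numFieldType.

Lemma sumr_indicator (T : finType) (A : {pred T}) (E : pred T) :
  \sum_(i in A) (E i)%:R = #|[pred i in A | E i]|%:R :> R.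
Proof.
rewrite -sum1_card natr_sum [LHS]big_mkcond [RHS]big_mkcond /=.
by apply: eq_bigr => i _; rewrite !inE; case: (i \in A); case: (E i).
Qed.

Lemma mean_double_sum_le (T : finType) (A : {pred T}) (F : T -> T -> R) (B : R) :
  (0 < #|A|)%N -> (forall i, \sum_(j in A) F i j <= #|A|%:R * B) ->
  (#|A|%:R ^+ 2)^-1 * \sum_(i in A) \sum_(j in A) F i j <= B.
Proof.
move=> A_gt0 row_le; rewrite ler_pdivrMl ?exprn_gt0 ?ltr0n //.
apply: le_trans (ler_sum _ (fun i _ => row_le i)) _.
by rewrite sumr_const -[leLHS]mulr_natl expr2 mulrA.
Qed.

End FiniteSums.

Section BinaryEntropy.
Variable R : realType.
Implicit Types t : R.

Lemma ln2_gt0 : 0 < ln (2 : R).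
Proof. by rewrite ln_gt0 // ltr1n. Qed.

Lemma ln2_ge_half : 2^-1 <= ln (2 : R).
Proof. by have := @ln_le_subr1 R 2^-1; rewrite lnV ?posrE ?invr_gt0 //; lra. Qed.

Lemma ln2_le1 : ln (2 : R) <= 1.
Proof. by have := @ln_le_subr1 R 2; lra. Qed.

Lemma ln2_binent t : 0 < t < 1 ->
  ln 2 * binent t = - (t * ln t) - (1 - t) * ln (1 - t).
Proof.
case/andP=> t0 t1; have := ln2_gt0.
rewrite /binent /log2 !lnV ?posrE ?subr_gt0 // => ln2_pos.
by field; rewrite gt_eqF.
Qed.

Lemma ln2_binent_odds t : 0 < t < 1 ->
  - ln (1 - t) - t * ln (t / (1 - t)) = ln 2 * binent t.
Proof.
move=> t01; have /andP[t0 t1] := t01.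
by rewrite ln2_binent // ln_div ?posrE ?subr_gt0 //; ring.
Qed.

Lemma binent_compl_le t : 2^-1 <= t < 1 -> 1 - binent t <= t * ln (t / (1 - t)).
Proof.
case/andP=> t_ge t_lt1.
have t0 : 0 < t by lra.
have t1 : 0 < 1 - t by lra.
have ln2_pos := ln2_gt0; have ln2_ge := ln2_ge_half; have ln2_le := ln2_le1.
rewrite -(ler_pM2l ln2_pos) mulrBr mulr1 ln2_binent ?t0 // ln_div ?posrE //.
(* In terms of L1 = ln (2t) in [0, 2t-1] and L2 = - ln (2(1-t)) >= 2t-1 the claim is polynomial. *)
set L1 := ln (2 * t); set L2 := - ln (2 * (1 - t)).
have lntE : ln t = L1 - ln 2 by rewrite /L1 lnM ?posrE //; ring.
have ln1tE : ln (1 - t) = - L2 - ln 2 by rewrite /L2 lnM ?posrE //; ring.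
have L1_ge0 : 0 <= L1 by apply: ln_ge0; lra.
have L1_le : L1 <= 2 * t - 1 by have := @ln_le_subr1 _ (2 * t); rewrite /L1; lra.
have L2_ge : 2 * t - 1 <= L2 by have := @ln_le_subr1 _ (2 * (1 - t)); rewrite /L2; lra.
rewrite lntE ln1tE.
have L1_bound : t * L1 * (1 - ln 2) <= t * (2 * t - 1) * (1 - ln 2).
  by apply: ler_wpM2r; [lra | apply: ler_wpM2l; lra].
have L2_bound : (2 * t - 1) * ((1 - t) + t * ln 2) <= L2 * ((1 - t) + t * ln 2).
  by apply: ler_wpM2r => //; nra.
have middle_bound : t * (2 * t - 1) * (1 - ln 2) <= (2 * t - 1) * ((1 - t) + t * ln 2).
  have : 0 <= (2 * t - 1) * (1 - 2 * t * (1 - ln 2)) by apply: mulr_ge0; nra.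
  nra.
nra.
Qed.

End BinaryEntropy.

Definition agree (I : finType) (T : eqType) (k k' : {ffun I -> T}) : {set I} :=
  [set j | k j == k' j].

Lemma card_probes_agree (I : finType) (T : eqType) (k k' : {ffun I -> T}) d :
  #|[set p : {ffun 'I_d -> I} | [forall i, k (p i) == k' (p i)]]| = (#|agree k k'| ^ d)%N.
Proof.
rewrite -[in RHS](card_ord d) -card_ffun_on; apply: eq_card => p; rewrite inE.
by apply/forallP/ffun_onP => h i; have := h i; rewrite inE.
Qed.

Section Agreement.
Variables (R : realType) (I : finType).
Implicit Types (k : {ffun I -> bool}) (A : {pred {ffun I -> bool}}).

Lemma sum_expr_card_agree k (z : R) :
  \sum_(k' : {ffun I -> bool}) z ^+ #|agree k k'| = (1 + z) ^+ #|I|.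
Proof.
have zE k' : z ^+ #|agree k k'| = \prod_j (if k j == k' j then z else 1).
  by rewrite -prodr_const big_mkcond; apply: eq_bigr => j _; rewrite inE.
under eq_bigr => k' _ do rewrite zE.
rewrite -(bigA_distr_bigA (fun j b => if k j == b then z else 1)) -prodr_const.
by apply: eq_bigr => j _; rewrite big_bool; case: (k j) => /=; rewrite addrC.
Qed.

Lemma sum_expR_agree k (t : R) : 0 < t < 1 ->
  \sum_(k' : {ffun I -> bool})
     expR (ln (t / (1 - t)) * (#|agree k k'|%:R - #|I|%:R * t))
  = expR (#|I|%:R * (ln 2 * binent t)).
Proof.
move=> t01; have /andP[t0 t1] := t01.
set z := t / (1 - t).
have z0 : 0 < z by rewrite divr_gt0 ?subr_gt0.
have termE k' : expR (ln z * (#|agree k k'|%:R - #|I|%:R * t))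
    = z ^+ #|agree k k'| * expR (- (#|I|%:R * t * ln z)).
  rewrite mulrBr expRD; congr (_ * expR _); last by ring.
  by rewrite mulrC expRM_natl lnK.
have oneDz : 1 + z = expR (- ln (1 - t)).
  rewrite -lnV ?posrE ?subr_gt0 // lnK ?posrE ?invr_gt0 ?subr_gt0 // /z.
  by field; rewrite subr_eq0 gt_eqF.
under eq_bigr do rewrite termE.
rewrite -mulr_suml sum_expr_card_agree -ln2_binent_odds // oneDz -expRM_natl -expRD.
by congr expR; ring.
Qed.

Lemma row_sum_agree_le A k (t : R) d : (0 < #|I|)%N -> (0 < #|A|)%N -> 0 < t < 1 ->
  d%:R <= #|I|%:R * t * ln (t / (1 - t)) ->
  #|I|%:R * (ln 2 * binent t) <= ln #|A|%:R ->
  \sum_(k' in A) (#|agree k k'|%:R / #|I|%:R) ^+ d <= #|A|%:R * t ^+ d.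
Proof.
move=> I_gt0 A_gt0 t01 d_le binent_le; have /andP[t0 _] := t01.
set z := t / (1 - t).
apply: (sum_exprn_le_of_sum_expR (b := #|I|%:R * ln z)).
- by move=> k'; rewrite divr_ge0 ?ler0n.
- by [].
- by rewrite mulrAC.
have expE k' : #|I|%:R * ln z * (#|agree k k'|%:R / #|I|%:R - t)
    = ln z * (#|agree k k'|%:R - #|I|%:R * t).
  by field; rewrite pnatr_eq0 -lt0n.
under eq_bigr do rewrite expE.
apply: (@le_trans _ _ (expR (#|I|%:R * (ln 2 * binent t)))).
  rewrite -(sum_expR_agree k t01) [X in _ <= X](bigID (mem A)) /= lerDl.
  by apply: sumr_ge0 => k' _; exact: expR_ge0.
by rewrite -[X in _ <= X]lnK ?posrE ?ltr0n // ler_expR.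
Qed.

Lemma row_sum_agree_le_card A k d :
  \sum_(k' in A) (#|agree k k'|%:R / #|I|%:R) ^+ d <= #|A|%:R :> R.
Proof.
rewrite -[X in _ <= X]sumr_const.
apply: ler_sum => k' _; apply: exprn_ile1; first by rewrite divr_ge0 ?ler0n.
have [->|I_gt0] := posnP #|I|; first by rewrite invr0 mulr0.
by rewrite ler_pdivrMr ?ltr0n // mul1r ler_nat max_card.
Qed.

End Agreement.

Section CollisionProbability.
Variables (R : realType) (N : nat) (L : finType).
Variables (Psi : {ffun 'I_N -> bool} -> L) (lam : L).
Local Notation S := (S_lam Psi lam).

Lemma P_lamE (E : pred {ffun 'I_N -> bool}) :
  P_lam R Psi lam E = #|S|%:R^-1 * \sum_(k in S) (E k)%:R.
Proof.
rewrite /P_lam mulrC sumr_indicator; congr (_ * _%:R); apply: eq_card => k.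
by rewrite [RHS]inE /S_lam inE; apply/idP/idP; rewrite in_setE.
Qed.

Lemma g_lam_collision r (p : 'I_r -> 'I_N) :
  g_lam R Psi lam p = (#|S|%:R ^+ 2)^-1 *
    \sum_(k in S) \sum_(k' in S) [forall i, k (p i) == k' (p i)]%:R.
Proof.
rewrite /g_lam.
under eq_bigr do rewrite P_lamE exprMn exprVn [(\sum_(k in _) _) ^+ 2]expr2 big_distrlr.
rewrite -mulr_sumr; congr (_ * _).
rewrite exchange_big /=; apply: eq_bigr => k _.
rewrite exchange_big /=; apply: eq_bigr => k' _.
set x0 := [ffun i => k (p i)].
have probeE (x : {ffun 'I_r -> bool}) : [forall i, k (p i) == x i] = (x == x0).
  apply/forallP/eqP => [probe_eq | ->] /=; last by move=> i; rewrite ffunE.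
  by apply/ffunP => i; rewrite ffunE; apply/esym/eqP.
under eq_bigr do rewrite probeE.
rewrite (bigD1 x0) //= eqxx mul1r big1 ?addr0 => [|x /negbTE ->].
  by congr ((nat_of_bool _)%:R); apply: eq_forallb => i; rewrite ffunE eq_sym.
by rewrite mul0r.
Qed.

Lemma Eg_lam_agree d : Eg_lam R Psi lam d =
  (#|S|%:R ^+ 2)^-1 * \sum_(k in S) \sum_(k' in S) (#|agree k k'|%:R / N%:R) ^+ d.
Proof.
rewrite /Eg_lam; under eq_bigr do rewrite g_lam_collision.
rewrite -mulr_sumr mulrCA; congr (_ * _).
rewrite exchange_big /= mulr_sumr; apply: eq_bigr => k _.
rewrite exchange_big /= mulr_sumr; apply: eq_bigr => k' _.
rewrite (@sumr_indicator _ _ predT) expr_div_n mulrC.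
rewrite -[#|agree k k'|%:R ^+ d]natrX -card_probes_agree.
by congr (_%:R / _); apply: eq_card => p; rewrite !inE.
Qed.

End CollisionProbability.

Theorem lemma5 (R : realType) (N d : nat) (L : finType)
    (Psi : {ffun 'I_N -> bool} -> L) (lam : L) (alpha : R) :
  (1 <= d)%N ->
  0 <= alpha ->
  alpha + d%:R <= N%:R ->
  N%:R - alpha <= log2 (#|S_lam Psi lam|%:R : R) ->
  Eg_lam R Psi lam d <= binent_inv (1 - (alpha + d%:R) / N%:R) ^+ d.
Proof.
move=> d_ge1 alpha_ge0 alpha_d_le log2S_ge.
have d_ge1R : 1 <= d%:R :> R by rewrite ler1n.
have N_gt0 : (0 < N)%N by rewrite -(ltr0n R); lra.
have ln2_pos := @ln2_gt0 R.
have lnS_ge : (N%:R - alpha) * ln 2 <= ln #|S_lam Psi lam|%:R by rewrite -ler_pdivlMr.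
have S_gt0 : (0 < #|S_lam Psi lam|)%N.
  rewrite lt0n; apply/eqP => S0; move: lnS_ge; rewrite S0 (ln0 (lexx 0)).
  have : 0 < (N%:R - alpha) * ln 2 by rewrite mulr_gt0 //; lra.
  lra.
rewrite Eg_lam_agree; apply: mean_double_sum_le => // k.
under eq_bigr do rewrite -[X in _ / X%:R](card_ord N).
(* [xget] returns 1 when no preimage exists; t = 1 only needs the trivial bound anyway. *)
rewrite /binent_inv; case: xgetP => [t _ [/andP[t_ge t_le1] ht] | _]; last first.
  by rewrite expr1n mulr1 row_sum_agree_le_card.
have [->|t_neq1] := eqVneq t 1; first by rewrite expr1n mulr1 row_sum_agree_le_card.
have t_lt1 : t < 1 by rewrite lt_neqAle t_neq1.
have compl_le := @binent_compl_le R t ltac:(by rewrite t_ge t_lt1).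
have N_compl : N%:R * (1 - binent t) = alpha + d%:R.
  by rewrite ht; field; rewrite pnatr_eq0 -lt0n.
apply: row_sum_agree_le; rewrite ?card_ord //.
- by apply/andP; split; lra.
- by have := ler_wpM2l (ler0n R N) compl_le; lra.
- have N_binent_le : N%:R * binent t <= N%:R - alpha by lra.
  by have := ler_wpM2l (ltW ln2_pos) N_binent_le; lra.
Qed.
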